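(* Consider the signal design problem described in the context: maximize over $T\ge2\delta$ the average flow-rate $\bar g(T)=\min\{\phi_1(T),(1-\frac{2\delta}{T})\pi_0C,\phi_2(T)\}$, where in $\phi_1,\phi_2$ the ratio $\pi$ is approximated by $\pi_0$. Then the optimal cycle lengths are: (1) Very sparse traffic, $k_0\in[0,\pi_0\bar K)$: the maximum is $\bar g^*\approx Vk_0$, with multiple optimal cycle lengths $T^*=\frac1{j_1}\frac LV$ for positive integers $j_1$ such that $Vk_0\le(1-\frac{2\delta}{T^*})\pi_0C$. (2) Sparse traffic, $k_0\in[\pi_0\bar K,\bar K)$: the maximum is determined by the intersection of $(1-\frac{2\delta}T)\pi_0C$ with the last decreasing branch $\frac{k_0L}{T}$ of $\phi_1$, namely $\bar g^*\approx\max_{T\in[\frac LV,\frac1{\pi_0}\frac LV]}\min\{\frac{k_0L}{T},(1-\frac{2\delta}T)\pi_0C\}$, with a unique optimal cycle length $T^*=\frac{k_0L}{\pi_0C}+2\delta$. (3) Critical traffic, $k_0=\bar K$: the maximum is determined by $(1-\frac{2\delta}T)\pi_0C$, and the unique optimal cycle length is $T^*=\infty$. (4) Dense traffic, $k_0\in(\bar K,K-\pi_0\frac CW]$: the maximum is determined by the intersection of $(1-\frac{2\delta}T)\pi_0C$ with the last decreasing branch $\frac{(K-k_0)L}{T}$ of $\phi_2$, namely $\bar g^*\approx\max_{T\in[\frac LW,\frac1{\pi_0}\frac LW]}\min\{\frac{(K-k_0)L}{T},(1-\frac{2\delta}T)\pi_0C\}$, with a unique optimal cycle length $T^*=\frac{(K-k_0)L}{\pi_0C}+2\delta$.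 (5) Very dense traffic, $k_0\in(K-\pi_0\frac CW,K]$: the maximum is $\bar g^*\approx(K-k_0)W$, with multiple optimal cycle lengths $T^*=\frac1{j_2}\frac LW$ for positive integers $j_2$ such that $(K-k_0)W\le(1-\frac{2\delta}{T^*})\pi_0C$.
   Context: Signalized ring road of length $L>0$ with LWR traffic, triangular fundamental diagram $Q(k)=\min\{Vk,(K-k)W\}$, $\bar K=\frac{W}{V+W}K$, $C=V\bar K$, average density $k_0\in[0,K]$, pretimed two-phase signal with cycle length $T$. With a start-up lost time $\delta>0$ per phase and a fixed allocation ratio $\pi_0\in(0,1)$ of the total effective green time $T-2\delta$, the effective green ratio is $\pi=(1-\frac{2\delta}T)\pi_0$, $T\ge2\delta$. In stationary states the average flow-rate is $\bar g=\min\{\phi_1,\pi C,\phi_2\}$ with $\phi_1=\frac{k_0}{k_1}\pi C$, $\phi_2=\frac{K-k_0}{K-k_2}\pi C$, where $\frac LV=(j_1+\alpha_1)T$, $j_1=\lfloor L/(VT)\rfloor$, $0\le\alpha_1<1$, $\frac LW=(j_2+\alpha_2)T$, $j_2=\lfloor L/(WT)\rfloor$, $0\le\alpha_2<1$, $k_1=\frac{j_1+\min\{\alpha_1/\pi,1\}}{j_1+\alpha_1}\pi\bar K$, $k_2=K-\frac{j_2+\min\{\alpha_2/\pi,1\}}{j_2+\alpha_2}\pi\frac CW$. Assuming $L/V$ and $L/W$ are much larger than $2\delta$, $\pi$ is replaced by $\pi_0$ in $\phi_1,\phi_2$ (but not in the term $\pi C=(1-\frac{2\delta}T)\pi_0C$),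 and the objective is $\max_{T\ge2\delta}\min\{\phi_1,(1-\frac{2\delta}T)\pi_0C,\phi_2\}$. *)

From Stdlib Require Import Reals Lra.
Open Scope R_scope.

Definition flr (x : R) : R := IZR (Int_part x).
Definition frc (x : R) : R := x - flr x.

Definition Kbar (K V W : R) : R := W / (V + W) * K.
Definition Cap (K V W : R) : R := V * Kbar K V W.

Definition j1 (L V T : R) : R := flr (L / V / T).
Definition alpha1 (L V T : R) : R := frc (L / V / T).
Definition j2 (L W T : R) : R := flr (L / W / T).
Definition alpha2 (L W T : R) : R := frc (L / W / T).

Definition k1 (K V W L T pi : R) : R :=
  (j1 L V T + Rmin (alpha1 L V T / pi) 1) / (j1 L V T + alpha1 L V T)
  * pi * Kbar K V W.
Definition k2 (K V W L T pi : R) : R :=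
  K - (j2 L W T + Rmin (alpha2 L W T / pi) 1) / (j2 L W T + alpha2 L W T)
      * pi * (Cap K V W / W).

Definition phi1 (K V W L k0 T pi : R) : R :=
  k0 / k1 K V W L T pi * (pi * Cap K V W).
Definition phi2 (K V W L k0 T pi : R) : R :=
  (K - k0) / (K - k2 K V W L T pi) * (pi * Cap K V W).

Definition capterm (K V W delta pi0 T : R) : R :=
  (1 - 2 * delta / T) * pi0 * Cap K V W.

Definition gbar (K V W L delta pi0 k0 T : R) : R :=
  Rmin (Rmin (phi1 K V W L k0 T pi0) (capterm K V W delta pi0 T))
       (phi2 K V W L k0 T pi0).

(* With x = L/(VT), phi1 = k0 V rho(x), where the flow ratio
   rho(x) = x / (j1 + min(alpha1/pi0, 1)) lies in [pi0, 1], equals 1 exactly when x is a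
   positive integer, and equals max(pi0, x) on the last branch x < 1; symmetrically
   phi2 = (K - k0) W rho(L/(WT)).  On the side of Kbar away from k0 the flow rate is at
   least pi0 C, which exceeds the capacity term, so gbar is the minimum of a single flow rate
   a v rho(L/(vT)) and the capacity term, which increases strictly towards pi0 C.  If the
   free-flow value a v is below pi0 C it is the maximum, attained exactly at the integer
   points T = L/(v j) the capacity allows; otherwise the maximum is where the capacity term
   meets the decreasing last branch a L / T.  At k0 = Kbar both bounds hold, gbar is the
   capacity term itself, and no finite cycle length is optimal. *)

From Stdlib Require Import Reals Lra Lia ZArith.
Open Scope R_scope.

Lemma flr_nonneg x : 0 < x -> 0 <= flr x.
Proof.
  intros hx; unfold flr; destruct (base_Int_part x) as [_ hlow].
  apply IZR_le; cut (-1 < Int_part x)%Z; [lia|].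
  apply lt_IZR; lra.
Qed.

Lemma flr_lt1 x : 0 <= x < 1 -> flr x = 0.
Proof.
  intros hx; unfold flr.
  now rewrite <- (Int_part_spec x 0) by (simpl; lra).
Qed.

Lemma flr_frc x : x = flr x + frc x.
Proof. unfold frc; ring. Qed.

Lemma frc_bounds x : 0 <= frc x < 1.
Proof. destruct (base_fp x); unfold frc, flr; fold (frac_part x); lra. Qed.

Lemma frc_INR n : frc (INR n) = 0.
Proof. unfold frc, flr; rewrite Int_part_INR, <- INR_IZR_INZ; ring. Qed.

(* For x = L/(VT) = j1 + alpha1, [cycle_index x pi] is j1 + min(alpha1/pi, 1), so that
   k1 = pi Kbar / flow_ratio x pi; symmetrically for k2 with x = L/(WT). *)
Definition cycle_index (x p : R) : R := flr x + Rmin (frc x / p) 1.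
Definition flow_ratio (x p : R) : R := x / cycle_index x p.

Section FlowRatio.

Variable p : R.
Hypothesis hp : 0 < p < 1.

Lemma cycle_index_bounds x :
  0 < x -> x <= cycle_index x p /\ p * cycle_index x p <= x.
Proof.
  intros hx; unfold cycle_index.
  pose proof (flr_nonneg x hx); pose proof (frc_bounds x); pose proof (flr_frc x).
  apply Rmin_case_strong; intros hmin.
  - assert (hdiv : frc x = p * (frc x / p)) by (field; lra).
    split; nra.
  - assert (p * (frc x / p) = frc x) by (field; lra).
    split; nra.
Qed.

Lemma flow_ratio_bounds x : 0 < x -> p <= flow_ratio x p <= 1.
Proof.
  intros hx; destruct (cycle_index_bounds x hx) as [hge hle].
  assert (hratio : flow_ratio x p * cycle_index x p = x)
    by (unfold flow_ratio; field; lra).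
  split; nra.
Qed.

Lemma flow_ratio_INR n : (0 < n)%nat -> flow_ratio (INR n) p = 1.
Proof.
  intros hn; pose proof (lt_0_INR n hn).
  unfold flow_ratio, cycle_index; rewrite frc_INR.
  replace (flr (INR n)) with (INR n) by (pose proof (flr_frc (INR n)); rewrite frc_INR in *; lra).
  rewrite Rmin_left by (unfold Rdiv; lra).
  field; unfold Rdiv; lra.
Qed.

Lemma flow_ratio_eq1_nat x :
  0 < x -> flow_ratio x p = 1 -> exists n, (0 < n)%nat /\ x = INR n.
Proof.
  intros hx hratio; destruct (cycle_index_bounds x hx) as [hge _].
  assert (hidx : x = cycle_index x p).
  { unfold flow_ratio in hratio; apply Rdiv_diag_uniq in hratio; lra. }
  revert hidx; unfold cycle_index; pose proof (frc_bounds x); pose proof (flr_frc x).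
  apply Rmin_case_strong; intros hmin hidx; [|lra].
  assert (hfrc : frc x = 0).
  { assert (frc x = p * (frc x / p)) by (field; lra). nra. }
  assert (hflr : (0 < Int_part x)%Z) by (apply lt_IZR; unfold flr in *; lra).
  exists (Z.to_nat (Int_part x)); split; [lia|].
  rewrite INR_IZR_INZ, Z2Nat.id by lia; unfold flr in *; lra.
Qed.

Lemma flow_ratio_lt1 x : 0 < x < 1 -> flow_ratio x p = Rmax p x.
Proof.
  intros hx; unfold flow_ratio, cycle_index.
  pose proof (flr_frc x); rewrite flr_lt1 in * by lra.
  replace (frc x) with x by lra; rewrite Rplus_0_l.
  destruct (Rle_dec x p) as [hxp | hxp].
  - assert (x / p <= 1) by (apply (Rmult_le_reg_r p); [lra|]; field_simplify; lra).
    rewrite Rmin_left, Rmax_left by lra.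
    field; lra.
  - assert (1 <= x / p) by (apply (Rmult_le_reg_r p); [lra|]; field_simplify; lra).
    rewrite Rmin_right, Rmax_right by lra.
    field.
Qed.

End FlowRatio.

Lemma le_sub_div_mul a b x w : 0 < w -> a <= b - x / w -> x <= (b - a) * w.
Proof.
  intros hw h; replace x with (x / w * w) by (field; lra).
  apply Rmult_le_compat_r; lra.
Qed.

Lemma sub_div_lt_mul a b x w : 0 < w -> b - x / w < a -> (b - a) * w < x.
Proof.
  intros hw h; replace x with (x / w * w) by (field; lra).
  apply Rmult_lt_compat_r; lra.
Qed.

Lemma Kbar_pos K V W : 0 < K -> 0 < V -> 0 < W -> 0 < Kbar K V W.
Proof. intros; unfold Kbar; apply Rmult_lt_0_compat; [apply Rdiv_lt_0_compat|]; lra. Qed.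

Lemma Cap_pos K V W : 0 < K -> 0 < V -> 0 < W -> 0 < Cap K V W.
Proof. intros; unfold Cap; apply Rmult_lt_0_compat; [|apply Kbar_pos]; assumption. Qed.

Lemma Kbar_lt K V W : 0 < K -> 0 < V -> 0 < W -> Kbar K V W < K.
Proof.
  intros; unfold Kbar.
  assert (W / (V + W) < 1) by (apply (Rmult_lt_reg_r (V + W)); [lra|]; field_simplify; lra).
  nra.
Qed.

Lemma Cap_jam_side K V W : 0 < V -> 0 < W -> Cap K V W = (K - Kbar K V W) * W.
Proof. intros; unfold Cap, Kbar; field; lra. Qed.

Section FlowRates.

Variables (K V W L k0 T p : R).
Hypotheses (hK : 0 < K) (hV : 0 < V) (hW : 0 < W) (hL : 0 < L) (hT : 0 < T)
  (hp : 0 < p < 1).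

Lemma phi1_flow_ratio : phi1 K V W L k0 T p = k0 * V * flow_ratio (L / V / T) p.
Proof.
  assert (hx : 0 < L / V / T) by (repeat apply Rdiv_lt_0_compat; lra).
  pose proof (cycle_index_bounds p hp _ hx); pose proof (Kbar_pos K V W hK hV hW).
  unfold phi1, k1, Cap, flow_ratio, j1, alpha1; fold (cycle_index (L / V / T) p).
  rewrite <- flr_frc; field; repeat split; lra.
Qed.

Lemma phi2_flow_ratio : phi2 K V W L k0 T p = (K - k0) * W * flow_ratio (L / W / T) p.
Proof.
  assert (hx : 0 < L / W / T) by (repeat apply Rdiv_lt_0_compat; lra).
  pose proof (cycle_index_bounds p hp _ hx); pose proof (Kbar_lt K V W hK hV hW).
  assert (0 < cycle_index (L / W / T) p * (W * T) * p * (K - Kbar K V W))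
    by (repeat apply Rmult_lt_0_compat; lra).
  unfold phi2, k2, flow_ratio, j2, alpha2; fold (cycle_index (L / W / T) p).
  rewrite <- flr_frc, Cap_jam_side by lra; field; repeat split; lra.
Qed.

End FlowRates.

Section LostTimeCapacity.

Variables (d p c : R) (cap : R -> R).
Hypotheses (hd : 0 < d) (hpc : 0 < p * c)
  (hcap : forall T, cap T = (1 - 2 * d / T) * p * c).

Let lost : R := 2 * d * (p * c).

Lemma capacity_deficit T : 0 < T -> cap T = p * c - lost / T.
Proof. intros; rewrite hcap; unfold lost; field; lra. Qed.

Lemma capacity_lt_saturation T : 0 < T -> cap T < p * c.
Proof.
  intros hT; rewrite capacity_deficit by lra.
  assert (0 < lost / T) by (unfold lost; apply Rdiv_lt_0_compat; nra). lra.
Qed.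

Lemma capacity_increasing T T' : 0 < T -> T < T' -> cap T < cap T'.
Proof.
  intros hT hTT'; rewrite !capacity_deficit by lra.
  assert (lost / T' < lost / T); [|lra].
  unfold Rdiv; apply Rmult_lt_compat_l; [unfold lost; nra|].
  apply Rinv_0_lt_contravar; lra.
Qed.

Lemma cycle_ge_lost_time T : 0 < T -> 0 <= cap T -> 2 * d <= T.
Proof.
  intros hT; rewrite capacity_deficit by lra; intros hcapT.
  assert (lost / T * T <= p * c * T) by (apply Rmult_le_compat_r; lra).
  replace (lost / T * T) with lost in * by (field; lra).
  unfold lost in *; nra.
Qed.

Lemma capacity_approaches_saturation eps :
  0 < eps -> exists T0, 2 * d <= T0 /\ forall T, T0 <= T -> p * c - eps < cap T.
Proof.
  intros heps; exists (2 * d + lost / eps).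
  assert (0 < lost / eps) by (unfold lost; apply Rdiv_lt_0_compat; nra).
  split; [lra|]; intros T hT; rewrite capacity_deficit by lra.
  assert (lost / T < eps); [|lra].
  apply (Rmult_lt_reg_r T); [lra|].
  replace (lost / T * T) with lost by (field; lra).
  replace lost with (lost / eps * eps) at 1 by (field; lra).
  unfold lost in *; nra.
Qed.

Lemma capacity_only_optimum (g : R -> R) :
  (forall T, 0 < T -> g T = cap T) ->
  (forall T, 2 * d <= T -> g T = cap T)
  /\ (forall T, 2 * d <= T -> g T < p * c)
  /\ (forall eps, 0 < eps -> exists T0, 2 * d <= T0 /\
        forall T, T0 <= T -> p * c - eps < g T)
  /\ (forall T, 2 * d <= T -> exists T', T < T' /\ g T < g T').
Proof.
  intros hg; split; [|split; [|split]].
  - intros T hT; apply hg; lra.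
  - intros T hT; rewrite hg by lra; apply capacity_lt_saturation; lra.
  - intros eps heps; destruct (capacity_approaches_saturation eps heps) as [T0 [hT0 happrox]].
    exists T0; split; [exact hT0|]; intros T hT; rewrite hg by lra; auto.
  - intros T hT; exists (T + 1); split; [lra|]; rewrite !hg by lra.
    apply capacity_increasing; lra.
Qed.

End LostTimeCapacity.

Section Branch.

Variables (L v a c p d : R) (cap g : R -> R).
Hypotheses (hL : 0 < L) (hv : 0 < v) (hc : 0 < c) (hp : 0 < p < 1) (hd : 0 < d)
  (hcap : forall T, cap T = (1 - 2 * d / T) * p * c)
  (hg : forall T, 0 < T -> g T = Rmin (a * v * flow_ratio (L / v / T) p) (cap T)).

Let hpc : 0 < p * c. Proof. nra. Qed.

Let hx T : 0 < T -> 0 < L / v / T.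
Proof. intros; repeat apply Rdiv_lt_0_compat; lra. Qed.

Section FreeFlow.

Hypothesis ha : 0 <= a.

Lemma branch_le_free_flow T : 0 < T -> g T <= a * v.
Proof.
  intros hT; rewrite hg by exact hT.
  destruct (flow_ratio_bounds p hp _ (hx T hT)).
  assert (a * v * flow_ratio (L / v / T) p <= a * v * 1)
    by (apply Rmult_le_compat_l; nra).
  apply Rmin_case_strong; lra.
Qed.

Lemma branch_at_integer_cycle (j : nat) :
  (0 < j)%nat -> a * v <= cap (L / v / INR j) ->
  2 * d <= L / v / INR j /\ g (L / v / INR j) = a * v.
Proof.
  intros hj hcapj; pose proof (lt_0_INR j hj).
  assert (hT : 0 < L / v / INR j) by (repeat apply Rdiv_lt_0_compat; lra).
  split.
  - apply (cycle_ge_lost_time d p c cap); auto; nra.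
  - rewrite hg by exact hT.
    replace (L / v / (L / v / INR j)) with (INR j) by (field; lra).
    rewrite flow_ratio_INR by auto; rewrite Rmult_1_r.
    apply Rmin_left; exact hcapj.
Qed.

Lemma branch_eq_free_flow T :
  0 < a -> 0 < T -> g T = a * v ->
  exists j : nat, (0 < j)%nat /\ T = L / v / INR j /\ a * v <= cap T.
Proof.
  intros ha' hT hgT; rewrite hg in hgT by exact hT.
  destruct (flow_ratio_bounds p hp _ (hx T hT)) as [_ hle].
  assert (hav : 0 < a * v) by nra.
  assert (hratio : flow_ratio (L / v / T) p = 1).
  { revert hgT; apply Rmin_case_strong; intros; nra. }
  destruct (flow_ratio_eq1_nat p hp _ (hx T hT) hratio) as [j [hj hjx]].
  pose proof (lt_0_INR j hj).
  exists j; split; [exact hj|]; split.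
  - rewrite <- hjx; field; lra.
  - revert hgT; rewrite hratio; apply Rmin_case_strong; lra.
Qed.

Lemma free_flow_optimum :
  (forall T, 2 * d <= T -> g T <= a * v)
  /\ (a * v <= cap (L / v) -> exists T, 2 * d <= T /\ g T = a * v)
  /\ (forall j : nat, (0 < j)%nat -> a * v <= cap (L / v / INR j) ->
        2 * d <= L / v / INR j /\ g (L / v / INR j) = a * v)
  /\ (0 < a -> forall T, 2 * d <= T -> g T = a * v ->
        exists j : nat, (0 < j)%nat /\ T = L / v / INR j /\ a * v <= cap T).
Proof.
  split; [|split; [|split]].
  - intros T hT; apply branch_le_free_flow; lra.
  - intros hcapL; exists (L / v / INR 1).
    apply branch_at_integer_cycle; [lia|].
    replace (L / v / INR 1) with (L / v) by (simpl; field; lra); exact hcapL.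
  - exact branch_at_integer_cycle.
  - intros ha' T hT; apply branch_eq_free_flow; lra.
Qed.

End FreeFlow.

Section Crossing.

Hypotheses (ha : 0 < a) (hsat : p * c <= a * v).

Let Ts := a * L / (p * c) + 2 * d.

Hypothesis hTs : Ts < L / v / p.

Let haL : 0 < a * L. Proof. nra. Qed.

Lemma crossing_after_free_flow : L / v < Ts.
Proof.
  assert (L / v <= a * L / (p * c)); [|unfold Ts; lra].
  replace (a * L / (p * c)) with (L / v * (a * v / (p * c))) by (field; lra).
  assert (1 <= a * v / (p * c))
    by (apply (Rmult_le_reg_r (p * c)); [lra|]; field_simplify; lra).
  assert (0 < L / v) by (apply Rdiv_lt_0_compat; lra).
  nra.
Qed.

Let hTs0 : 0 < Ts.
Proof.
  pose proof crossing_after_free_flow.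
  assert (0 < L / v) by (apply Rdiv_lt_0_compat; lra); lra.
Qed.

Lemma crossing_balance : a * L / Ts = cap Ts.
Proof.
  pose proof hTs0; rewrite hcap.
  replace (2 * d) with (Ts - a * L / (p * c)) by (unfold Ts; ring).
  field; lra.
Qed.

Let flow_decreasing T : Ts < T -> a * L / T < a * L / Ts.
Proof.
  intros hT; unfold Rdiv; apply Rmult_lt_compat_l; [lra|].
  apply Rinv_0_lt_contravar; lra.
Qed.

Let capacity_below_crossing T : 0 < T -> T < Ts -> cap T < a * L / Ts.
Proof.
  intros; rewrite crossing_balance; apply (capacity_increasing d p c); auto.
Qed.

Let saturation_below_crossing : a * v * p < a * L / Ts.
Proof.
  assert (hvp : Ts * (v * p) < L).
  { apply (Rmult_lt_compat_r (v * p)) in hTs; [|nra].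
    replace (L / v / p * (v * p)) with L in hTs by (field; lra); exact hTs. }
  apply (Rmult_lt_reg_r Ts); [lra|].
  replace (a * L / Ts * Ts) with (a * L) by (field; lra).
  nra.
Qed.

Lemma branch_at_crossing : g Ts = a * L / Ts.
Proof.
  pose proof crossing_after_free_flow; pose proof saturation_below_crossing.
  assert (hx1 : L / v / Ts < 1)
    by (apply (Rmult_lt_reg_r Ts); [lra|]; field_simplify; lra).
  assert (hflow : a * v * (L / v / Ts) = a * L / Ts) by (field; lra).
  assert (hxp : p <= L / v / Ts) by nra.
  rewrite hg, (flow_ratio_lt1 p hp), Rmax_right by (lra || (split; [apply hx|]; lra)).
  rewrite hflow, <- crossing_balance; apply Rmin_left; lra.
Qed.

Lemma branch_lt_crossing T : 0 < T -> T <> Ts -> g T < a * L / Ts.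
Proof.
  intros hT hne; rewrite hg by exact hT.
  destruct (Rlt_or_le T Ts) as [hlt | hge].
  - pose proof (capacity_below_crossing T hT hlt).
    apply Rmin_case_strong; lra.
  - pose proof crossing_after_free_flow; pose proof saturation_below_crossing.
    assert (hx1 : L / v / T < 1)
      by (apply (Rmult_lt_reg_r T); [lra|]; field_simplify; lra).
    pose proof (flow_decreasing T ltac:(lra)).
    assert (hflow : a * v * (L / v / T) = a * L / T) by (field; lra).
    rewrite (flow_ratio_lt1 p hp) by (split; [apply hx|]; lra).
    assert (a * v * Rmax p (L / v / T) < a * L / Ts)
      by (apply Rmax_case; lra).
    apply Rmin_case_strong; lra.
Qed.

Lemma min_lt_crossing T :
  0 < T -> T <> Ts -> Rmin (a * L / T) (cap T) < a * L / Ts.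
Proof.
  intros hT hne; destruct (Rlt_or_le T Ts) as [hlt | hge].
  - pose proof (capacity_below_crossing T hT hlt); apply Rmin_case_strong; lra.
  - pose proof (flow_decreasing T ltac:(lra)); apply Rmin_case_strong; lra.
Qed.

Lemma crossing_optimum :
  L / v <= Ts <= L / v / p
  /\ a * L / Ts = cap Ts
  /\ (forall T, L / v <= T <= L / v / p ->
        Rmin (a * L / T) (cap T) <= Rmin (a * L / Ts) (cap Ts))
  /\ g Ts = Rmin (a * L / Ts) (cap Ts)
  /\ (forall T, 2 * d <= T -> g T <= g Ts)
  /\ (forall T, 2 * d <= T -> g T = g Ts -> T = Ts).
Proof.
  pose proof crossing_after_free_flow as hafter.
  assert (0 < L / v) by (apply Rdiv_lt_0_compat; lra).
  assert (hmin : Rmin (a * L / Ts) (cap Ts) = a * L / Ts)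
    by (rewrite <- crossing_balance; apply Rmin_left; lra).
  rewrite hmin, branch_at_crossing.
  split; [lra|]; split; [exact crossing_balance|]; split; [|split; [reflexivity|split]].
  - intros T hT; destruct (Req_dec T Ts) as [-> | hne]; [rewrite hmin; lra|].
    pose proof (min_lt_crossing T ltac:(lra) hne); lra.
  - intros T hT; destruct (Req_dec T Ts) as [-> | hne]; [rewrite branch_at_crossing; lra|].
    pose proof (branch_lt_crossing T ltac:(lra) hne); lra.
  - intros T hT hgT; destruct (Req_dec T Ts) as [-> | hne]; [reflexivity|].
    pose proof (branch_lt_crossing T ltac:(lra) hne); lra.
Qed.

End Crossing.

End Branch.

Section Regimes.

Variables (L V W K delta pi0 k0 : R).
Hypotheses (hL : 0 < L) (hV : 0 < V) (hW : 0 < W) (hK : 0 < K) (hdelta : 0 < delta)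
  (hpi0 : 0 < pi0 < 1).

Let hcap_lt T : 0 < T -> capterm K V W delta pi0 T < pi0 * Cap K V W.
Proof.
  intros hT; apply (capacity_lt_saturation delta pi0 (Cap K V W)); auto.
  apply Rmult_lt_0_compat; [lra|]; apply Cap_pos; assumption.
Qed.

Lemma free_flow_ge_saturation T :
  Kbar K V W <= k0 -> 0 < T -> pi0 * Cap K V W <= k0 * V * flow_ratio (L / V / T) pi0.
Proof.
  intros hk hT; assert (hx : 0 < L / V / T) by (repeat apply Rdiv_lt_0_compat; lra).
  destruct (flow_ratio_bounds pi0 hpi0 _ hx); pose proof (Kbar_pos K V W hK hV hW).
  replace (pi0 * Cap K V W) with (Kbar K V W * V * pi0) by (unfold Cap; ring).
  apply Rmult_le_compat; nra.
Qed.

Lemma jam_flow_ge_saturation T :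
  k0 <= Kbar K V W -> 0 < T ->
  pi0 * Cap K V W <= (K - k0) * W * flow_ratio (L / W / T) pi0.
Proof.
  intros hk hT; assert (hx : 0 < L / W / T) by (repeat apply Rdiv_lt_0_compat; lra).
  destruct (flow_ratio_bounds pi0 hpi0 _ hx); pose proof (Kbar_lt K V W hK hV hW).
  rewrite Cap_jam_side by lra.
  replace (pi0 * ((K - Kbar K V W) * W)) with ((K - Kbar K V W) * W * pi0) by ring.
  apply Rmult_le_compat; nra.
Qed.

Lemma gbar_free_branch T :
  k0 <= Kbar K V W -> 0 < T ->
  gbar K V W L delta pi0 k0 T
  = Rmin (k0 * V * flow_ratio (L / V / T) pi0) (capterm K V W delta pi0 T).
Proof.
  intros hk hT; unfold gbar; rewrite phi1_flow_ratio, phi2_flow_ratio by auto.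
  pose proof (hcap_lt T hT); pose proof (jam_flow_ge_saturation T hk hT).
  apply Rmin_left; apply Rmin_case_strong; lra.
Qed.

Lemma gbar_jam_branch T :
  Kbar K V W <= k0 -> 0 < T ->
  gbar K V W L delta pi0 k0 T
  = Rmin ((K - k0) * W * flow_ratio (L / W / T) pi0) (capterm K V W delta pi0 T).
Proof.
  intros hk hT; unfold gbar; rewrite phi1_flow_ratio, phi2_flow_ratio by auto.
  pose proof (hcap_lt T hT); pose proof (free_flow_ge_saturation T hk hT).
  repeat apply Rmin_case_strong; intros; lra.
Qed.

Lemma gbar_critical T :
  k0 = Kbar K V W -> 0 < T -> gbar K V W L delta pi0 k0 T = capterm K V W delta pi0 T.
Proof.
  intros hk hT; rewrite gbar_free_branch by lra.
  pose proof (hcap_lt T hT); pose proof (free_flow_ge_saturation T ltac:(lra) hT).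
  apply Rmin_right; lra.
Qed.

End Regimes.

Theorem theorem4p1 (L V W K delta pi0 k0 : R)
  (hL : 0 < L) (hV : 0 < V) (hW : 0 < W) (hK : 0 < K) (hdelta : 0 < delta)
  (hpi0 : 0 < pi0) (hpi1 : pi0 < 1) (hk0 : 0 <= k0) (hk0K : k0 <= K) :
  let Kb := Kbar K V W in
  let C := Cap K V W in
  let g := gbar K V W L delta pi0 k0 in
  let cap := capterm K V W delta pi0 in
  (* (1) very sparse traffic *)
  (k0 < pi0 * Kb ->
     (forall T, 2 * delta <= T -> g T <= V * k0)
     /\ (V * k0 <= cap (L / V) -> exists T, 2 * delta <= T /\ g T = V * k0)
     /\ (forall j : nat, (0 < j)%nat -> V * k0 <= cap (L / V / INR j) ->
           2 * delta <= L / V / INR j /\ g (L / V / INR j) = V * k0)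
     /\ (0 < k0 -> forall T, 2 * delta <= T -> g T = V * k0 ->
           exists j : nat, (0 < j)%nat /\ T = L / V / INR j /\ V * k0 <= cap T))
  /\
  (* (2) sparse traffic *)
  (pi0 * Kb <= k0 < Kb ->
     let Ts := k0 * L / (pi0 * C) + 2 * delta in
     Ts < L / V / pi0 ->
       L / V <= Ts <= L / V / pi0
       /\ k0 * L / Ts = cap Ts
       /\ (forall T, L / V <= T <= L / V / pi0 ->
             Rmin (k0 * L / T) (cap T) <= Rmin (k0 * L / Ts) (cap Ts))
       /\ g Ts = Rmin (k0 * L / Ts) (cap Ts)
       /\ (forall T, 2 * delta <= T -> g T <= g Ts)
       /\ (forall T, 2 * delta <= T -> g T = g Ts -> T = Ts))
  /\
  (* (3) critical traffic: optimal cycle length is infinite *)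
  (k0 = Kb ->
       (forall T, 2 * delta <= T -> g T = cap T)
       /\ (forall T, 2 * delta <= T -> g T < pi0 * C)
       /\ (forall eps, 0 < eps -> exists T0, 2 * delta <= T0 /\
             forall T, T0 <= T -> pi0 * C - eps < g T)
       /\ (forall T, 2 * delta <= T -> exists T', T < T' /\ g T < g T'))
  /\
  (* (4) dense traffic *)
  (Kb < k0 <= K - pi0 * C / W ->
     let Ts := (K - k0) * L / (pi0 * C) + 2 * delta in
     Ts < L / W / pi0 ->
       L / W <= Ts <= L / W / pi0
       /\ (K - k0) * L / Ts = cap Ts
       /\ (forall T, L / W <= T <= L / W / pi0 ->
             Rmin ((K - k0) * L / T) (cap T) <= Rmin ((K - k0) * L / Ts) (cap Ts))
       /\ g Ts = Rmin ((K - k0) * L / Ts) (cap Ts)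
       /\ (forall T, 2 * delta <= T -> g T <= g Ts)
       /\ (forall T, 2 * delta <= T -> g T = g Ts -> T = Ts))
  /\
  (* (5) very dense traffic *)
  (K - pi0 * C / W < k0 ->
     (forall T, 2 * delta <= T -> g T <= (K - k0) * W)
     /\ ((K - k0) * W <= cap (L / W) ->
           exists T, 2 * delta <= T /\ g T = (K - k0) * W)
     /\ (forall j : nat, (0 < j)%nat -> (K - k0) * W <= cap (L / W / INR j) ->
           2 * delta <= L / W / INR j /\ g (L / W / INR j) = (K - k0) * W)
     /\ (k0 < K -> forall T, 2 * delta <= T -> g T = (K - k0) * W ->
           exists j : nat, (0 < j)%nat /\ T = L / W / INR j /\ (K - k0) * W <= cap T)).
Proof.
  cbv zeta.
  assert (hp : 0 < pi0 < 1) by lra.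
  pose proof (Kbar_pos K V W hK hV hW) as hKb; pose proof (Cap_pos K V W hK hV hW) as hC.
  assert (hCV : Cap K V W = V * Kbar K V W) by reflexivity.
  assert (hCW := Cap_jam_side K V W hV hW).
  assert (hcap : forall T, capterm K V W delta pi0 T = (1 - 2 * delta / T) * pi0 * Cap K V W)
    by reflexivity.
  pose proof (gbar_free_branch L V W K delta pi0 k0 hL hV hW hK hdelta hp) as hfree.
  pose proof (gbar_jam_branch L V W K delta pi0 k0 hL hV hW hK hdelta hp) as hjam.
  split; [|split; [|split; [|split]]].
  - intros hk; rewrite (Rmult_comm V k0).
    apply (free_flow_optimum L V k0 (Cap K V W) pi0 delta); auto.
    intros T; apply hfree; nra.
  - intros [hk1 hk2] hTs; apply (crossing_optimum L V k0 (Cap K V W) pi0 delta); auto.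
    + intros T; apply hfree; lra.
    + nra.
    + rewrite hCV; nra.
  - intros hk; apply (capacity_only_optimum delta pi0 (Cap K V W)); auto; [nra|].
    intros T; apply gbar_critical; auto.
  - intros [hk1 hk2] hTs; pose proof (le_sub_div_mul _ _ _ _ hW hk2) as hsat.
    apply (crossing_optimum L W (K - k0) (Cap K V W) pi0 delta); auto.
    + intros T; apply hjam; lra.
    + nra.
  - intros hk; pose proof (sub_div_lt_mul _ _ _ _ hW hk) as hsat.
    assert (hkb : Kbar K V W <= k0) by nra.
    destruct (free_flow_optimum L W (K - k0) (Cap K V W) pi0 delta _ _ hL hW hC hp hdelta
                hcap (fun T => hjam T hkb) ltac:(lra)) as [hle [hex [hint huniq]]].
    split; [exact hle|]; split; [exact hex|]; split; [exact hint|].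
    intros hk'; apply huniq; lra.
Qed.
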